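(* For the Hard-SVM algorithm, there exist linearly-separable data distributions $D_A,D_B$ over $\mathbb{R}\times\{-1,1\}$ and a training-set size $n$ that induce an evolutionary prediction game with beneficial coexistence: there is an equilibrium $\mathbf{p}^*$ with $p^*_A>0$, $p^*_B>0$ such that each group's fitness at $\mathbf{p}^*$ exceeds its fitness when it is the sole group in the population, $F_k(\mathbf{p}^* )>F_k(\mathbf{e}_k)$ for $k\in\{A,B\}$.
   Context: Hard-SVM: given a linearly separable training set $\{(x_i,y_i)\}_{i=1}^n\subset\mathbb{R}^d\times\{-1,1\}$, output $\mathrm{sign}(w^*\cdot x+b^* )$ with $(w^*,b^* )=\arg\max_{(w,b):\|w\|=1}\min_iy_i(w\cdot x_i+b)$. The learning algorithm samples $S\sim D_{\mathbf{p}}^n$ i.i.d. from $D_{\mathbf{p}}=p_AD_A+p_BD_B$ ($\mathbf{p}\in\Delta^2$) and outputs the Hard-SVM classifier $h_S$; the evolutionary prediction game is $F_k(\mathbf{p})=\mathbb{E}_S[\Pr_{(x,y)\sim D_k}[h_S(x)=y]]$. $\mathbf{e}_k$ is the state in which only group $k$ is present. Equilibrium: $\mathrm{supp}(\mathbf{p}^* )\subseteq\arg\max_kF_k(\mathbf{p}^* )$. A distribution is linearly separable if its support can be separated by a hyperplane according to the labels. *)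

From HB Require Import structures.
From mathcomp Require Import all_boot all_order all_algebra.
From mathcomp Require Import reals.
From Stdlib Require Import ClassicalEpsilon.
Set Implicit Arguments. Unset Strict Implicit. Unset Printing Implicit Defensive.
Import Order.TTheory GRing.Theory Num.Theory.
Local Open Scope ring_scope.

Section HardSVM.
Variable R : realType.

Definition example := (R * R)%type.
(* A finitely supported distribution over R x {-1,1}: a list of
   ((x, y), weight) atoms. *)
Definition fdist := seq (example * R).

Definition valid_dist (D : fdist) : Prop :=
  (forall z, z \in D -> 0 <= z.2 /\ (z.1.2 = 1 \/ z.1.2 = -1)) /\
  \sum_(z <- D) z.2 = 1.

Definition in_supp (D : fdist) (e : example) : Prop :=
  exists w, (e, w) \in D /\ 0 < w.

Definition lin_separable (D : fdist) : Prop :=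
  exists w b : R, w != 0 /\
    forall e, in_supp D e -> 0 < e.2 * (w * e.1 + b).

Definition margin (s : seq example) (w b : R) : R :=
  let f (e : example) := e.2 * (w * e.1 + b) in
  match s with
  | [::] => 0
  | e :: s' => foldr (fun e' m => Num.min (f e') m) (f e) s'
  end.

Definition is_hardsvm (s : seq example) (wb : R * R) : Prop :=
  (`|wb.1| = 1 :> R) /\
  forall w' b' : R, `|w'| = 1 -> margin s w' b' <= margin s wb.1 wb.2.

(* When all training labels
   coincide the argmax does not exist (margin unbounded), and the classifier
   is then the constant classifier predicting that label. *)
Definition hardsvm (s : seq example) (x : R) : R :=
  if all (fun e => e.2 == 1) s then 1
  else if all (fun e => e.2 == -1) s then -1
  else let wb := epsilon (inhabits (1, 0)) (is_hardsvm s) in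
       Num.sg (wb.1 * x + wb.2).

Definition accuracy (D : fdist) (h : R -> R) : R :=
  \sum_(z <- D) z.2 * (h z.1.1 == z.1.2)%:R.

Definition mixture (pA pB : R) (DA DB : fdist) : fdist :=
  [seq (z.1, pA * z.2) | z <- DA] ++ [seq (z.1, pB * z.2) | z <- DB].

(* the two groups: true = A, false = B *)
(* F_k(p) = E_{S ~ D_p^n} [ Pr_{(x,y) ~ D_k} [h_S x = y] ] *)
Definition fitness (DA DB : fdist) (n : nat) (k : bool) (pA pB : R) : R :=
  let L := mixture pA pB DA DB in
  let dflt : example * R := ((0, 0), 0) in
  \sum_(t : {ffun 'I_n -> 'I_(size L)})
     (\prod_(i < n) (nth dflt L (t i)).2) *
     accuracy (if k then DA else DB)
              (hardsvm [seq (nth dflt L (t i)).1 | i <- enum 'I_n]).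

Definition equilibrium (DA DB : fdist) (n : nat) (pA pB : R) : Prop :=
  (0 < pA -> fitness DA DB n false pA pB <= fitness DA DB n true pA pB) /\
  (0 < pB -> fitness DA DB n true pA pB <= fitness DA DB n false pA pB).

End HardSVM.

(* Take two mirror-image distributions on the line, each labelled by the
   sign of x, and samples of size n = 2.  Hard-SVM trained on two points with
   equal labels is the constant classifier of that label; on two points with
   opposite labels it is the threshold at their midpoint.  Within group A the
   pair 9, -4 gives the threshold 5/2, which misclassifies the positive point
   2, whereas the mixture also draws cross-group pairs such as 4, -2 whose
   threshold 1 classifies group A perfectly.  By symmetry F_A = F_B at
   p = (1/2, 1/2), so it is an equilibrium, and summing over the 36 two-point
   samples gives F_k(1/2, 1/2) = 93/128 > 88/128 = F_k(e_k). *)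
From HB Require Import structures.
From mathcomp Require Import all_boot all_order all_algebra.
From mathcomp Require Import reals ring lra.
From Stdlib Require Import ClassicalEpsilon.
Import Order.TTheory GRing.Theory Num.Theory.
Local Open Scope ring_scope.

Section HardSVMPairs.
Variable R : realType.

Lemma fitness2E (DA DB : fdist R) (k : bool) (pA pB : R) :
  fitness DA DB 2 k pA pB =
  \sum_(z1 <- mixture pA pB DA DB) \sum_(z2 <- mixture pA pB DA DB)
     z1.2 * z2.2 * accuracy (if k then DA else DB) (hardsvm [:: z1.1; z2.1]).
Proof.
rewrite /fitness; set L := mixture pA pB DA DB; set z0 : example R * R := ((0, 0), 0).
pose pair_fun (ij : 'I_(size L) * 'I_(size L)) : {ffun 'I_2 -> 'I_(size L)} :=
  [ffun i : 'I_2 => if val i == 0%N then ij.1 else ij.2].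
have pair_funK : {on predT, bijective pair_fun}.
  exists (fun t => (t ord0, t ord_max)) => [[i j] _|t _]; first by rewrite !ffunE.
  apply/ffunP => -[[|[|i]] lt_i2] //=; rewrite ffunE /=; congr (t _); exact: val_inj.
symmetry; rewrite (big_nth z0) big_mkord.
under eq_bigr do rewrite (big_nth z0) big_mkord.
rewrite pair_bigA (reindex pair_fun pair_funK); apply: eq_bigr => -[i j] _.
by rewrite !enum_ordSl enum_ord0 /= !big_ord_recl big_ord0 !ffunE /= mulr1.
Qed.

Lemma pair_margin_le_half_gap (w p q b : R) : q <= p -> `|w| = 1 ->
  Num.min (w * p + b) (- (w * q + b)) <= (p - q) / 2.
Proof.
move=> le_qp /eqP; rewrite eqr_norml ler01 andbT => /orP[]/eqP->;
  by rewrite ge_min; case: lerP => //= ?; lra.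
Qed.

(* The margin of [s] is that of a positive point [p] and a negative point [q];
   the maximizer is unique, so [epsilon] must return it. *)
Lemma hardsvm_midpoint (s : seq (example R)) (p q : R) : q < p ->
  (forall w b, margin s w b = Num.min (w * p + b) (- (w * q + b))) ->
  epsilon (inhabits (1, 0)) (is_hardsvm s) = (1, - ((p + q) / 2)).
Proof.
move=> lt_qp marginE.
have midpoint_margin : margin s 1 (- ((p + q) / 2)) = (p - q) / 2.
  rewrite marginE; apply: le_anti.
  by rewrite pair_margin_le_half_gap ?normr1 ?(ltW lt_qp) //= le_min; apply/andP; split; lra.
have midpoint_opt : is_hardsvm s (1, - ((p + q) / 2)).
  split; first exact: normr1.
  by move=> w b w1; rewrite midpoint_margin marginE pair_margin_le_half_gap ?(ltW lt_qp).
have := epsilon_spec (inhabits (1, 0)) (is_hardsvm s) (ex_intro _ _ midpoint_opt).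
case: (epsilon _ _) => w b [/= w1 /(_ 1 (- ((p + q) / 2)) (normr1 R))].
rewrite midpoint_margin marginE le_min => /andP[].
move: w1 => /eqP; rewrite eqr_norml ler01 andbT => /orP[]/eqP-> ? ?.
  by congr pair; lra.
by exfalso; lra.
Qed.

Lemma hardsvm_pair (x1 x2 x : R) : x1 != 0 -> x2 != 0 ->
  hardsvm [:: (x1, Num.sg x1); (x2, Num.sg x2)] x =
  if Num.sg x1 == Num.sg x2 then Num.sg x1 else Num.sg (x - (x1 + x2) / 2).
Proof.
have neq_label : (-1 == 1 :> R) = false by apply/eqP; lra.
rewrite /hardsvm /= !sgr_cp0 !neq_lt => /orP[x1_lt0|x1_gt0] /orP[x2_lt0|x2_gt0].
- rewrite x1_lt0 x2_lt0 (lt_gtF x1_lt0) (lt_gtF x2_lt0).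
  by rewrite (ltr0_sg x1_lt0) (ltr0_sg x2_lt0) eqxx.
- rewrite x1_lt0 (lt_gtF x1_lt0) (lt_gtF x2_gt0).
  rewrite (ltr0_sg x1_lt0) (gtr0_sg x2_gt0) neq_label /=.
  rewrite (@hardsvm_midpoint _ x2 x1 (lt_trans x1_lt0 x2_gt0)) /=.
    by rewrite mul1r (addrC x2).
  by move=> w b; rewrite /margin /= mul1r mulN1r.
- rewrite x1_gt0 x2_lt0 (lt_gtF x2_lt0) (lt_gtF x1_gt0).
  rewrite (gtr0_sg x1_gt0) (ltr0_sg x2_lt0) eq_sym neq_label /=.
  rewrite (@hardsvm_midpoint _ x1 x2 (lt_trans x2_lt0 x1_gt0)) /=.
    by rewrite mul1r.
  by move=> w b; rewrite /margin /= mul1r mulN1r minC.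
- by rewrite x1_gt0 x2_gt0 (gtr0_sg x1_gt0) (gtr0_sg x2_gt0) eqxx.
Qed.

End HardSVMPairs.

Definition int_example := (int * int)%type.
Definition int_dist := seq (int_example * nat).

Definition sign_labelled (e : int_example) : bool := (e.1 != 0) && (e.2 == Num.sg e.1).

(* Hard-SVM on two sign-labelled points, with the midpoint test doubled to stay in [int]. *)
Definition svm_pair (e1 e2 : int_example) (x : int) : int :=
  if e1.2 == e2.2 then e1.2 else Num.sg (2 * x - (e1.1 + e2.1)).

Definition int_accuracy (e1 e2 : int_example) (D : int_dist) : nat :=
  sumn [seq (z.2 * (svm_pair e1 e2 z.1.1 == z.1.2))%N | z <- D].

Definition pair_score (P Q D : int_dist) : nat :=
  sumn [seq sumn [seq (z1.2 * z2.2 * int_accuracy z1.1 z2.1 D)%N | z2 <- Q] | z1 <- P].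

Section IntegerData.
Variables (R : realType) (d : nat).

Definition embed (e : int_example) : example R := (e.1%:~R, e.2%:~R).

Definition embD (P : int_dist) : fdist R := [seq (embed z.1, z.2%:R / d%:R) | z <- P].

Lemma embD_cat (P Q : int_dist) : embD (P ++ Q) = embD P ++ embD Q.
Proof. exact: map_cat. Qed.

Lemma sgr_sub_half (a m : R) : Num.sg (a - m / 2) = Num.sg (2 * a - m).
Proof.
have -> : a - m / 2 = (2 * a - m) / 2 by field.
by rewrite sgrM [Num.sg 2^-1]gtr0_sg ?mulr1 // invr_gt0 ltr0n.
Qed.

Lemma hardsvm_embed (e1 e2 : int_example) (x : int) :
  sign_labelled e1 -> sign_labelled e2 ->
  hardsvm [:: embed e1; embed e2] x%:~R = (svm_pair e1 e2 x)%:~R.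
Proof.
case: e1 e2 => [x1 y1] [x2 y2]; rewrite /sign_labelled /=.
move=> /andP[nz1 /eqP->] /andP[nz2 /eqP->].
rewrite /embed /svm_pair /= !intr_sg hardsvm_pair ?intr_eq0 //.
rewrite -[Num.sg x1%:~R]intr_sg -[Num.sg x2%:~R]intr_sg eqr_int.
case: eqP => // _; rewrite sgr_sub_half intr_sg.
by rewrite rmorphB rmorphD rmorphM.
Qed.

Lemma accuracy_embD (e1 e2 : int_example) (D : int_dist) :
  sign_labelled e1 -> sign_labelled e2 ->
  accuracy (embD D) (hardsvm [:: embed e1; embed e2]) = (int_accuracy e1 e2 D)%:R / d%:R.
Proof.
move=> e1_sl e2_sl.
rewrite /accuracy /int_accuracy /embD sumnE !big_map natr_sum mulr_suml.
by apply: eq_bigr => z _; rewrite /= hardsvm_embed // eqr_int natrM mulrAC.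
Qed.

Lemma pair_block (c1 c2 : R) (P Q D : int_dist) :
  all (sign_labelled \o fst) P -> all (sign_labelled \o fst) Q ->
  \sum_(z1 <- [seq (z.1, c1 * z.2) | z <- embD P])
    \sum_(z2 <- [seq (z.1, c2 * z.2) | z <- embD Q])
      z1.2 * z2.2 * accuracy (embD D) (hardsvm [:: z1.1; z2.1])
  = c1 * c2 * (pair_score P Q D)%:R / d%:R ^+ 3.
Proof.
move=> /allP P_sl /allP Q_sl.
rewrite /pair_score sumnE /embD -!map_comp !big_map natr_sum !mulr_sumr mulr_suml.
apply: eq_big_seq => z1 z1P; rewrite sumnE !big_map natr_sum !mulr_sumr mulr_suml.
apply: eq_big_seq => z2 z2P /=; rewrite accuracy_embD; [|exact: P_sl|exact: Q_sl].
by rewrite !natrM -exprVn; ring.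
Qed.

Lemma fitness_embD (P Q : int_dist) (k : bool) (pA pB : R) :
  all (sign_labelled \o fst) P -> all (sign_labelled \o fst) Q ->
  let score X Y := (pair_score X Y (if k then P else Q))%:R in
  fitness (embD P) (embD Q) 2 k pA pB =
  (pA * pA * score P P + pA * pB * score P Q + pB * pA * score Q P
   + pB * pB * score Q Q) / d%:R ^+ 3.
Proof.
move=> P_sl Q_sl /=; rewrite fitness2E /mixture big_cat /=.
under eq_bigr do rewrite big_cat.
under [X in _ + X]eq_bigr do rewrite big_cat.
have -> : (if k then embD P else embD Q) = embD (if k then P else Q) by case: k.
by rewrite !big_split /= !pair_block // !mulrDl !addrA.
Qed.

Lemma valid_dist_embD (P : int_dist) : (0 < d)%N ->
  all (sign_labelled \o fst) P -> sumn [seq z.2 | z <- P] = d -> valid_dist (embD P).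
Proof.
move=> d_gt0 /allP P_sl P_mass; split.
  move=> _ /mapP[z /P_sl /andP[nz_x /eqP y_sg] ->] /=.
  split; first by rewrite divr_ge0.
  rewrite y_sg intr_sg; move: nz_x; rewrite neq_lt => /orP[x_lt0|x_gt0].
    by right; rewrite ltr0_sg // ltrz0.
  by left; rewrite gtr0_sg // ltr0z.
move: P_mass; rewrite sumnE !big_map -mulr_suml -natr_sum => ->.
by rewrite divff // pnatr_eq0 -lt0n.
Qed.

Lemma lin_separable_embD (P : int_dist) :
  all (sign_labelled \o fst) P -> lin_separable (embD P).
Proof.
move=> /allP P_sl; exists 1, 0; split => [|e [w [/mapP[z /P_sl /andP[nz_x /eqP y_sg]]]]].
  exact: oner_neq0.
by case=> -> _ _ /=; rewrite y_sg mul1r addr0 -intrM -normrEsg ltr0z normr_gt0.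
Qed.

End IntegerData.

Definition groupA : int_dist := [:: ((2, 1), 1%N); ((-4, -1), 2%N); ((9, 1), 1%N)].
Definition groupB : int_dist := [:: ((-2, -1), 1%N); ((4, 1), 2%N); ((-9, -1), 1%N)].

Lemma pair_scores_groupA :
  [/\ pair_score groupA groupA groupA = 44, pair_score groupA groupB groupA = 47,
      pair_score groupB groupA groupA = 47 & pair_score groupB groupB groupA = 48]%N.
Proof. by vm_compute. Qed.

Lemma pair_scores_groupB :
  [/\ pair_score groupA groupA groupB = 48, pair_score groupA groupB groupB = 47,
      pair_score groupB groupA groupB = 47 & pair_score groupB groupB groupB = 44]%N.
Proof. by vm_compute. Qed.

Theorem theorem7 (R : realType) :
  exists (DA DB : fdist R) (n : nat),
    [/\ valid_dist DA, valid_dist DB, lin_separable DA, lin_separable DB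
        & lin_separable (DA ++ DB)] /\ (0 < n)%N /\
    exists pA pB : R,
      [/\ 0 < pA, 0 < pB & pA + pB = 1] /\
      [/\ equilibrium DA DB n pA pB,
          fitness DA DB n true 1 0 < fitness DA DB n true pA pB &
          fitness DA DB n false 0 1 < fitness DA DB n false pA pB].
Proof.
have groupA_sl : all (sign_labelled \o fst) groupA by [].
have groupB_sl : all (sign_labelled \o fst) groupB by [].
exists (embD R 4 groupA), (embD R 4 groupB), 2%N; split; first split.
- exact: valid_dist_embD.
- exact: valid_dist_embD.
- exact: lin_separable_embD.
- exact: lin_separable_embD.
- by rewrite -embD_cat; apply: lin_separable_embD; rewrite all_cat groupA_sl.
split=> //; exists (1/2), (1/2); split; first by split; lra.
rewrite /equilibrium !fitness_embD //=.
have [-> -> -> ->] := pair_scores_groupA; have [-> -> -> ->] := pair_scores_groupB.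
have -> : (4 : R) ^+ 3 = 64 by rewrite !exprS expr0; lra.
by split; first split=> _; lra.
Qed.
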